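(* There exist two infinite bit sequences $\{I_n^0\}_{n=0}^\infty\in\{0,1\}^\omega$ and $\{I_n^1\}_{n=0}^\infty\in\{0,1\}^\omega$ such that for every $Q\in\mathbb{N}$ there exist $t\in\mathbb{N}$ and two $Q$-indistinguishable binary words $x=x_0\ldots x_{t-1}$ and $y=y_0\ldots y_{t-1}$ of length $t$ with \[I_0^{x_0}\oplus\cdots\oplus I_{t-1}^{x_{t-1}}\neq I_0^{y_0}\oplus\cdots\oplus I_{t-1}^{y_{t-1}},\] where $\oplus$ denotes XOR.
   Context: Two binary words $x,y\in\{0,1\}^*$ are $Q$-indistinguishable if there is no deterministic finite automaton over the alphabet $\{0,1\}$ with at most $Q$ states which reaches different states after reading $x$ and after reading $y$ (from its initial state). *)

From mathcomp Require Import all_boot.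
Set Implicit Arguments. Unset Strict Implicit. Unset Printing Implicit Defensive.

(* A DFA over {0,1} (bits as bool: false = 0, true = 1) with state type S,
   initial state s0 and transition function delta.  Running it on a word. *)
Definition run (S : Type) (delta : S -> bool -> S) (s0 : S) (w : seq bool) : S :=
  foldl delta s0 w.

Definition Q_indist (Q : nat) (x y : seq bool) : Prop :=
  forall (S : finType) (s0 : S) (delta : S -> bool -> S),
    #|S| <= Q -> run delta s0 x = run delta s0 y.

(* I b n is the bit I_n^b.  xorsum I w = I_0^{w_0} xor ... xor I_{t-1}^{w_{t-1}}. *)
Definition xorsum (I : bool -> nat -> bool) (w : seq bool) : bool :=
  foldr addb false [seq I (nth false w i) i | i <- iota 0 (size w)].

(* Take I^0 = 0 and I^1 the indicator of the factorials, and for a given Q let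
   M = Q!.  Any map of a set with at most Q elements is eventually periodic
   with a period p <= Q and a preperiod < Q, and p divides M; so a DFA with at
   most Q states cannot tell a block of M + M equal letters from a block of M
   of them, whence 0^(2M) 1^M and 0^M 1^(2M) are Q-indistinguishable.  Their
   xor-sums differ by the parity of the number of factorials in [M, 2M), and
   that interval contains the single factorial M, because the next factorial
   after N! is at least 2 N!. *)

From mathcomp Require Import all_boot.

Set Implicit Arguments.
Unset Strict Implicit.
Unset Printing Implicit Defensive.

Section EventuallyPeriodic.

Variables (S : finType) (g : S -> S).

Lemma iter_collision s :
  exists i p, [/\ 0 < p, i + p <= #|S| & iter (i + p) g s = iter i g s].
Proof.
have /trajectP [i lt_i_ord loop_i] := looping_order g s.
exists i, (order g s - i); rewrite subnKC ?(ltnW lt_i_ord) // subn_gt0.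
by split=> //; apply: max_card.
Qed.

Lemma iter_add_period s i p n k :
  iter (i + p) g s = iter i g s -> i <= n -> iter (n + k * p) g s = iter n g s.
Proof.
move=> loop_ip le_i_n; rewrite -(subnK le_i_n) -addnA !(iterD (n - i)).
congr iter; elim: k => [|k IHk]; first by rewrite mul0n addn0.
by rewrite mulSn addnCA iterD IHk -iterD addnC.
Qed.

Lemma iter_add_fact s m n :
  #|S| <= m -> m <= n -> iter (n + m`!) g s = iter n g s.
Proof.
move=> le_S_m le_m_n; have [i [p [p_gt0 le_ip_S loop_ip]]] := iter_collision s.
have le_p_m : p <= m by apply: leq_trans (leq_addl i p) (leq_trans le_ip_S _).
have /dvdnP [k ->] : p %| m`! by apply: dvdn_fact; rewrite p_gt0.
apply: iter_add_period loop_ip _.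
by apply: leq_trans (leq_addr p i) (leq_trans le_ip_S (leq_trans le_S_m _)).
Qed.

End EventuallyPeriodic.

Lemma run_cat (S : Type) (delta : S -> bool -> S) s u v :
  run delta s (u ++ v) = run delta (run delta s u) v.
Proof. exact: foldl_cat. Qed.

Lemma run_nseq (S : Type) (delta : S -> bool -> S) s n b :
  run delta s (nseq n b) = iter n (delta^~ b) s.
Proof. by elim: n s => [|n IHn] s //; rewrite iterSr -IHn. Qed.

Lemma Q_indist_sym Q x y : Q_indist Q x y -> Q_indist Q y x.
Proof. by move=> xy S s0 delta le_S_Q; rewrite xy. Qed.

Lemma Q_indist_cat Q x1 y1 x2 y2 :
  Q_indist Q x1 y1 -> Q_indist Q x2 y2 -> Q_indist Q (x1 ++ x2) (y1 ++ y2).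
Proof.
move=> xy1 xy2 S s0 delta le_S_Q.
by rewrite !run_cat (xy1 _ _ _ le_S_Q) (xy2 _ _ _ le_S_Q).
Qed.

Lemma Q_indist_nseq_add_fact Q n b :
  Q <= n -> Q_indist Q (nseq (n + Q`!) b) (nseq n b).
Proof.
move=> le_Q_n S s0 delta le_S_Q.
by rewrite !run_nseq (iter_add_fact _ _ le_S_Q le_Q_n).
Qed.

Fixpoint xorsum_from (I : bool -> nat -> bool) (k : nat) (w : seq bool) : bool :=
  if w is b :: w' then I b k (+) xorsum_from I k.+1 w' else false.

Lemma xorsum_fromE I k w :
  xorsum_from I k w =
  foldr addb false [seq I (nth false w i) (k + i) | i <- iota 0 (size w)].
Proof.
elim: w k => [|b w IHw] k //=; rewrite addn0 IHw.
rewrite -[1]addn0 iotaDl -map_comp; congr (_ (+) foldr _ _ _).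
by apply: eq_map => i /=; rewrite add1n addSnnS.
Qed.

Lemma xorsumE I w : xorsum I w = xorsum_from I 0 w.
Proof. by rewrite xorsum_fromE. Qed.

Lemma xorsum_from_cat I k u v :
  xorsum_from I k (u ++ v) = xorsum_from I k u (+) xorsum_from I (k + size u) v.
Proof.
elim: u k => [|b u IHu] k /=; first by rewrite addn0.
by rewrite IHu addbA addSnnS.
Qed.

Lemma xorsum_from_nseq I k n b :
  xorsum_from I k (nseq n b) = \big[addb/false]_(k <= i < k + n) I b i.
Proof.
elim: n k => [|n IHn] k /=; first by rewrite addn0 big_geq.
by rewrite IHn [RHS]big_ltn addnS -?addSn // ltnS leq_addr.
Qed.

Lemma xorsum_zeros_ones (I1 : nat -> bool) a c :
  xorsum (fun b => if b then I1 else fun=> false) (nseq a false ++ nseq c true)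
  = \big[addb/false]_(a <= i < a + c) I1 i.
Proof.
rewrite xorsumE xorsum_from_cat !xorsum_from_nseq size_nseq /=.
by rewrite big1 // add0n.
Qed.

Definition isfact (n : nat) : bool := [exists m : 'I_n.+1, m`! == n].

Lemma isfactP n : reflect (exists m, m`! = n) (isfact n).
Proof.
apply: (iffP existsP) => [[m /eqP <-] | [m <-]]; first by exists m.
by exists (Ordinal (leq_ltn_trans (fact_geq m) (ltnSn _))).
Qed.

Lemma fact_double_leq N m : N`! < m`! -> N`! + N`! <= m`!.
Proof.
move=> lt_fact; have [/leq_fact|lt_N_m] := leqP m N; first by rewrite leqNgt lt_fact.
case: N lt_fact lt_N_m => [|N] // _ /leq_fact; apply: leq_trans.
by rewrite [N.+2`!]factS mulSn leq_add2l leq_pmull.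
Qed.

Lemma xor_isfact_fact_double N :
  \big[addb/false]_(N`! <= i < N`! + N`!) isfact i = true.
Proof.
rewrite big_ltn; last by rewrite -[ltnLHS]addn0 ltn_add2l fact_gt0.
have -> : isfact N`! by apply/isfactP; exists N.
rewrite big1_seq // => k /andP [_]; rewrite mem_index_iota => /andP [lt_N_k lt_k_2N].
apply/negbTE/isfactP => [[m def_k]]; move: lt_N_k lt_k_2N; rewrite -def_k => lt_Nm.
by rewrite ltnNge fact_double_leq.
Qed.

Theorem lemma1 :
  exists I0 I1 : nat -> bool,
    forall Q : nat, exists (t : nat) (x y : seq bool),
      [/\ size x = t, size y = t, Q_indist Q x y &
          xorsum (fun b => if b then I1 else I0) x
            != xorsum (fun b => if b then I1 else I0) y].
Proof.
exists (fun=> false), isfact => Q; set M := Q`!.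
have le_Q_M : Q <= M by apply: fact_geq.
exists (M + M + M), (nseq (M + M) false ++ nseq M true),
  (nseq M false ++ nseq (M + M) true).
split.
- by rewrite size_cat !size_nseq.
- by rewrite size_cat !size_nseq addnA.
- apply: Q_indist_cat; first exact: Q_indist_nseq_add_fact.
  exact/Q_indist_sym/Q_indist_nseq_add_fact.
- rewrite !xorsum_zeros_ones addnA.
  rewrite [X in _ != X](@big_cat_nat _ _ _ (M + M)) ?leq_addr //= xor_isfact_fact_double.
  by case: (\big[addb/false]_(_ <= i < _) isfact i).
Qed.
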